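(* Let $P_0,P_1,P_2\in\mathbb H$ be distinct and set $d_0:=\sqrt{1-2\langle P_1,P_2\rangle}$, $d_1:=\sqrt{1-2\langle P_2,P_0\rangle}$, $d_2:=\sqrt{1-2\langle P_0,P_1\rangle}$ (indices in $\mathbb Z/3\mathbb Z$). Then for every $i\in\mathbb Z/3\mathbb Z$, $$d_i\ge\sqrt3\qquad\text{and}\qquad d_i^2-1\le(d_{i+1}^2-1)(d_{i+2}^2-1).$$
   Context: $\langle v,w\rangle=-v_1w_1+v_2w_2+v_3w_3$ on $\mathbb R^3$; $\mathbb H=\{P\in\mathbb R^3:\langle P,P\rangle=-1,\ P_1\ge1\}$. *)

From Stdlib Require Import Reals.
Open Scope R_scope.

Definition R3 : Type := (R * R * R)%type.

Definition mink (v w : R3) : R :=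
  match v, w with
  | (v1, v2, v3), (w1, w2, w3) => - v1 * w1 + v2 * w2 + v3 * w3
  end.

Definition coord1 (v : R3) : R := match v with (v1, _, _) => v1 end.

Definition inH (P : R3) : Prop := mink P P = -1 /\ 1 <= coord1 P.

Definition d (P : nat -> R3) (i : nat) : R :=
  sqrt (1 - 2 * mink (P ((i + 1) mod 3)%nat) (P ((i + 2) mod 3)%nat)).

(* For P, Q in H one has <P,Q> <= -1 (reversed Cauchy-Schwarz), so
   d_i^2 - 1 = -2 <P_(i+1), P_(i+2)> >= 2.  The Gram determinant of three
   vectors for a form of signature (-,+,+) is minus the square of their
   coordinate determinant, hence <= 0.  For points of H, with
   a, b, c >= 1 the three values -<P_j,P_k>, this says
   (a - bc)^2 <= (b^2 - 1)(c^2 - 1) <= (bc)^2, so a <= 2bc; multiplying by 2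
   gives the second inequality. *)
From Stdlib Require Import Reals Lra Psatz Lia.
Open Scope R_scope.

Lemma mink_le_m1 (P Q : R3) : inH P -> inH Q -> mink P Q <= -1.
Proof.
  destruct P as [[p0 p1] p2], Q as [[q0 q1] q2]; unfold inH, mink, coord1.
  intros [HP HP1] [HQ HQ1].
  set (s := p1 * q1 + p2 * q2).
  (* Lagrange-type identity, using p0^2 = 1 + p1^2 + p2^2 and likewise for q *)
  assert (Hsq : (1 + s)² <= (p0 * q0)²).
  { assert (Hp : p0 ^ 2 = 1 + p1 ^ 2 + p2 ^ 2) by lra.
    assert (Hq : q0 ^ 2 = 1 + q1 ^ 2 + q2 ^ 2) by lra.
    assert (E : (p0 * q0)² - (1 + s)²
                = (p1 - q1) ^ 2 + (p2 - q2) ^ 2 + (p1 * q2 - p2 * q1) ^ 2).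
    { unfold Rsqr, s.
      replace (p0 * q0 * (p0 * q0)) with (p0 ^ 2 * q0 ^ 2) by ring.
      rewrite Hp, Hq; ring. }
    pose proof (pow2_ge_0 (p1 - q1)); pose proof (pow2_ge_0 (p2 - q2)).
    pose proof (pow2_ge_0 (p1 * q2 - p2 * q1)); lra. }
  apply Rsqr_incr_0_var in Hsq; [unfold s in Hsq; lra | nra].
Qed.

Definition det3 (P Q S : R3) : R :=
  match P, Q, S with
  | (p0, p1, p2), (q0, q1, q2), (s0, s1, s2) =>
      p0 * (q1 * s2 - q2 * s1) - p1 * (q0 * s2 - q2 * s0)
      + p2 * (q0 * s1 - q1 * s0)
  end.

Lemma mink_gram_det (P Q S : R3) :
  mink P P * mink Q Q * mink S S + 2 * mink P Q * mink Q S * mink S P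
  - mink P P * mink Q S ^ 2 - mink Q Q * mink S P ^ 2 - mink S S * mink P Q ^ 2
  = - det3 P Q S ^ 2.
Proof.
  destruct P as [[p0 p1] p2], Q as [[q0 q1] q2], S as [[s0 s1] s2]; simpl; ring.
Qed.

Lemma mink_gram_le1 (P Q S : R3) : inH P -> inH Q -> inH S ->
  mink Q S ^ 2 + mink S P ^ 2 + mink P Q ^ 2
  + 2 * mink P Q * mink Q S * mink S P <= 1.
Proof.
  intros [HP _] [HQ _] [HS _].
  pose proof (mink_gram_det P Q S) as G.
  rewrite HP, HQ, HS in G.
  nra.
Qed.

Lemma le_2mul_of_gram (a b c : R) : 1 <= b -> 1 <= c ->
  a ^ 2 + b ^ 2 + c ^ 2 - 2 * a * b * c <= 1 -> a <= 2 * b * c.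
Proof.
  intros Hb Hc Hgram.
  assert (Hsq : (a - b * c)² <= (b * c)²).
  { unfold Rsqr.
    replace ((a - b * c) * (a - b * c))
      with (a ^ 2 + b ^ 2 + c ^ 2 - 2 * a * b * c - 1 + (b ^ 2 - 1) * (c ^ 2 - 1))
      by ring.
    nra. }
  apply Rsqr_incr_0_var in Hsq; nra.
Qed.

Lemma mink_le_2mul (P Q S : R3) : inH P -> inH Q -> inH S ->
  - mink Q S <= 2 * (- mink S P) * (- mink P Q).
Proof.
  intros HP HQ HS.
  apply le_2mul_of_gram.
  - pose proof (mink_le_m1 S P HS HP); lra.
  - pose proof (mink_le_m1 P Q HP HQ); lra.
  - pose proof (mink_gram_le1 P Q S HP HQ HS); nra.
Qed.

Lemma sqrt3_le_sqrt_mink (P Q : R3) : inH P -> inH Q ->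
  sqrt 3 <= sqrt (1 - 2 * mink P Q).
Proof.
  intros HP HQ; pose proof (mink_le_m1 P Q HP HQ).
  apply sqrt_le_1_alt; lra.
Qed.

Lemma sqrt_mink_sqr_sub1 (P Q : R3) : inH P -> inH Q ->
  sqrt (1 - 2 * mink P Q) ^ 2 - 1 = - 2 * mink P Q.
Proof.
  intros HP HQ; pose proof (mink_le_m1 P Q HP HQ).
  rewrite <- Rsqr_pow2, Rsqr_sqrt by lra; ring.
Qed.

Lemma triangle_sides (P Q S : R3) : inH P -> inH Q -> inH S ->
  sqrt 3 <= sqrt (1 - 2 * mink Q S) /\
  sqrt (1 - 2 * mink Q S) ^ 2 - 1 <=
    (sqrt (1 - 2 * mink S P) ^ 2 - 1) * (sqrt (1 - 2 * mink P Q) ^ 2 - 1).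
Proof.
  intros HP HQ HS; split.
  - exact (sqrt3_le_sqrt_mink Q S HQ HS).
  - rewrite !sqrt_mink_sqr_sub1 by assumption.
    pose proof (mink_le_2mul P Q S HP HQ HS); lra.
Qed.

Theorem lemma3p2 (P : nat -> R3) :
  inH (P 0%nat) -> inH (P 1%nat) -> inH (P 2%nat) ->
  P 0%nat <> P 1%nat -> P 1%nat <> P 2%nat -> P 0%nat <> P 2%nat ->
  forall i : nat, (i < 3)%nat ->
    sqrt 3 <= d P i /\
    (d P i) ^ 2 - 1 <=
      ((d P ((i + 1) mod 3)) ^ 2 - 1) * ((d P ((i + 2) mod 3)) ^ 2 - 1).
Proof.
  intros H0 H1 H2 _ _ _ i Hi.
  assert (i = 0%nat \/ i = 1%nat \/ i = 2%nat) as [-> | [-> | ->]] by lia;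
    unfold d; simpl.
  - exact (triangle_sides _ _ _ H0 H1 H2).
  - exact (triangle_sides _ _ _ H1 H2 H0).
  - exact (triangle_sides _ _ _ H2 H0 H1).
Qed.
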